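(* Let $\alpha\in(0,1]$, $b>0$, $p>\max(1/\alpha,b/\alpha)$, $H,K\ge0$ and $n\ge1$. Let $\Upsilon_0,\dots,\Upsilon_n$ be real random variables such that for all $0\le i\le j\le n$, \[ \mathbb E(|\Upsilon_j-\Upsilon_i|^p)\le H(j-i)^{\alpha p}+K(j-i)^b. \] Then for every $\gamma$ with $\max(1,b)<\gamma<\alpha p$ there is a constant $c=c(\alpha,\gamma,p,b)>0$ (depending only on $\alpha,\gamma,p,b$) such that \[ \mathbb E\Big(\max_{0\le i\le j\le n}|\Upsilon_j-\Upsilon_i|^p\Big)\le c\big(Hn^{\alpha p}+Kn^\gamma\big). \] In particular, if $\Upsilon_0=0$ then $\mathbb E(\max_{0\le i\le n}|\Upsilon_i|^p)\le c(Hn^{\alpha p}+Kn^\gamma)$. *)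

From HB Require Import structures.
From mathcomp Require Import all_boot all_order all_algebra.
From mathcomp Require Import all_classical all_reals all_analysis.
Set Implicit Arguments. Unset Strict Implicit. Unset Printing Implicit Defensive.
Import Order.TTheory GRing.Theory Num.Theory.
Local Open Scope ring_scope.

(* max_{0<=i<=j<=n} |Y j x - Y i x|^p  (all terms are >= 0, so 0 is a valid
   neutral element for the max) *)
Definition maxincr_pow (R : realType) (T : Type) (Y : nat -> T -> R)
  (n : nat) (p : R) (x : T) : R :=
  \big[Num.max/0]_(i < n.+1) \big[Num.max/0]_(j < n.+1 | (i <= j)%N)
     (`|Y j x - Y i x| `^ p).

Definition max_pow (R : realType) (T : Type) (Y : nat -> T -> R)
  (n : nat) (p : R) (x : T) : R :=
  \big[Num.max/0]_(i < n.+1) (`|Y i x| `^ p).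

From HB Require Import structures.
From mathcomp Require Import all_boot all_order all_algebra.
From mathcomp Require Import all_classical all_reals all_analysis.
From mathcomp Require Import measurable_realfun zify ring lra.
Import Order.TTheory GRing.Theory Num.Theory.
Set Implicit Arguments.
Unset Strict Implicit.
Unset Printing Implicit Defensive.
Local Open Scope ring_scope.

(* Dyadic chaining.  Take L with n <= 2^L <= 2n and freeze Y after time n.
   Every increment Y_j - Y_i is at most twice the sum over the levels
   k <= L of the largest increment of Y over the 2^k dyadic intervals of
   length 2^(L-k).  Weighting level k by q^k, the p-th power of that sum is
   bounded by a weighted sum of p-th powers of dyadic increments, whose
   expectation the moment hypothesis controls level by level.  With
   q^(2p) = 2^(1-gamma) both the weights and the level contributions form
   convergent geometric series, and 2^L <= 2n turns 2^(L gamma) and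
   2^(L alpha p) into multiples of n^gamma and n^(alpha p). *)

Section PowerBounds.
Variable R : realType.
Implicit Types (x p : R) (n : nat).

Lemma powR_exprn x n p : 0 <= x -> (x ^+ n) `^ p = (x `^ p) ^+ n.
Proof. by move=> x0; rewrite -powR_mulrn // powRAC powR_mulrn // powR_ge0. Qed.

Lemma powRV x p : 0 <= x -> (x^-1) `^ p = (x `^ p)^-1.
Proof. by move=> x0; rewrite -powR_inv1 // -powRrM mulN1r powRN. Qed.

Lemma powR_lt1 x p : 1 < x -> p < 0 -> x `^ p < 1.
Proof.
move=> x1 p0; rewrite /powR gt_eqF ?(lt_trans ltr01) // expR_lt1.
by rewrite nmulr_rlt0 // ln_gt0.
Qed.

Lemma sum_expr_le_inv x n : 0 < x < 1 -> \sum_(0 <= k < n) x ^+ k <= (1 - x)^-1.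
Proof.
case/andP=> x0 x1; have := @geometric_le_lim R n 1 x ler01 x0.
by rewrite gtr0_norm // mul1r seriesEnat /=; under eq_bigr do rewrite mul1r; apply.
Qed.

Lemma powR_bigmax_le_sum (I : Type) (r : seq I) (F : I -> R) p :
  0 < p -> (forall i, 0 <= F i) ->
  (\big[Num.max/0]_(i <- r) F i) `^ p <= \sum_(i <- r) F i `^ p.
Proof.
move=> p0 F0; elim: r => [|a r IH]; first by rewrite !big_nil powR0 ?gt_eqF.
rewrite !big_cons; have [_|_] := leP (F a) (\big[Num.max/0]_(i <- r) F i).
  by rewrite (le_trans IH) // lerDr powR_ge0.
by rewrite lerDl sumr_ge0 // => i _; rewrite powR_ge0.
Qed.

(* With [M] the largest ratio [d j / w j]: [sum d <= M * sum w] and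
   [M ^ p <= sum (d / w) ^ p]. *)
Lemma powR_sum_le_weighted (I : eqType) (r : seq I) (d w : I -> R) p :
  0 < p -> (forall j, 0 <= d j) -> (forall j, 0 < w j) ->
  (\sum_(j <- r) d j) `^ p
    <= (\sum_(j <- r) w j) `^ p * \sum_(j <- r) (d j / w j) `^ p.
Proof.
move=> p0 d0 w0; set M := \big[Num.max/0]_(j <- r) (d j / w j).
have M0 : 0 <= M by exact: bigmax_ge_id.
have W0 : 0 <= \sum_(j <- r) w j by apply: sumr_ge0 => j _; exact: ltW.
have dM : \sum_(j <- r) d j <= (\sum_(j <- r) w j) * M.
  rewrite mulr_suml big_seq [leRHS]big_seq; apply: ler_sum => j jr.
  rewrite -{1}(divfK (lt0r_neq0 (w0 j)) (d j)) mulrC ler_wpM2l ?(ltW (w0 j)) //.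
  exact: (@le_bigmax_seq _ _ _ _ _ _ xpredT (fun j => d j / w j) jr).
apply: (le_trans (ge0_ler_powR (ltW p0) _ _ dM)); rewrite ?nnegrE ?mulr_ge0 //.
  exact: sumr_ge0.
rewrite powRM // ler_wpM2l ?powR_ge0 // powR_bigmax_le_sum // => j.
by rewrite divr_ge0 ?(ltW (w0 j)).
Qed.

End PowerBounds.

Section DyadicChaining.
Variable R : realType.
Implicit Types (g : nat -> R) (L k m t : nat).

Definition dyadic_incr g L k m : R :=
  `|g (m.+1 * 2 ^ (L - k))%N - g (m * 2 ^ (L - k))%N|.

Definition dyadic_osc g L k : R :=
  \big[Num.max/0]_(0 <= m < 2 ^ k) dyadic_incr g L k m.

Lemma dyadic_osc_ge0 g L k : 0 <= dyadic_osc g L k.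
Proof. exact: bigmax_ge_id. Qed.

Lemma le_dyadic_osc g L k m :
  (m < 2 ^ k)%N -> dyadic_incr g L k m <= dyadic_osc g L k.
Proof.
by move=> mk; apply: (@le_bigmax_seq _ _ _ _ _ _ xpredT); rewrite ?mem_index_iota.
Qed.

Lemma dyadic_incr_finest g L m : dyadic_incr g L L m = `|g m.+1 - g m|.
Proof. by rewrite /dyadic_incr subnn expn0 !muln1. Qed.

Lemma sum_dyadic_osc_double g L :
  \sum_(0 <= k < L.+1) dyadic_osc (fun u => g (2 * u)%N) L k
  = \sum_(0 <= k < L.+1) dyadic_osc g L.+1 k.
Proof.
apply: eq_big_nat => k /andP[_ kL]; apply: eq_bigr => m _.
rewrite /dyadic_incr subSn // expnS.
by rewrite !mulnA [(2 * m.+1)%N]mulnC [(2 * m)%N]mulnC.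
Qed.

(* Induction on [L]: the even points of the grid of [g] at level [L.+1] form
   the grid of [u |-> g (2 * u)] at level [L], and [t] is at most one finest
   increment away from the even point [2 * (t / 2)]. *)
Lemma dyadic_chaining g L t : (t <= 2 ^ L)%N ->
  `|g t - g 0%N| <= \sum_(0 <= k < L.+1) dyadic_osc g L k.
Proof.
elim: L g t => [|L IH] g t ht.
  rewrite big_nat1; have [->|->] : (t = 0 \/ t = 1)%N by rewrite expn0 in ht; lia.
    by rewrite subrr normr0 dyadic_osc_ge0.
  by rewrite -(dyadic_incr_finest g 0) le_dyadic_osc.
have half_le : (t./2 <= 2 ^ L)%N by rewrite expnS in ht; rewrite -divn2; lia.
have := IH (fun u => g (2 * u)%N) _ half_le.
rewrite muln0 sum_dyadic_osc_double => even_le; rewrite big_nat_recr //=.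
apply: (le_trans (ler_distD (g (2 * t./2)%N) _ _)); rewrite addrC lerD //.
rewrite mul2n; have := odd_double_half t; case: (odd t) => /= t_eq.
  rewrite -{1}t_eq add1n -(dyadic_incr_finest g L.+1) le_dyadic_osc //.
  by move: ht; rewrite -t_eq expnS; lia.
by rewrite -{1}t_eq add0n subrr normr0 dyadic_osc_ge0.
Qed.

Definition dyadic_bound g L (p q : R) : R :=
  (2 / (1 - q)) `^ p * \sum_(0 <= k < L.+1) ((q `^ p) ^+ k)^-1 *
    \sum_(0 <= m < 2 ^ k) dyadic_incr g L k m `^ p.

Lemma powR_dist_le_dyadic_bound g L (p q : R) i j :
  0 < p -> 0 < q < 1 -> (i <= 2 ^ L)%N -> (j <= 2 ^ L)%N ->
  `|g j - g i| `^ p <= dyadic_bound g L p q.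
Proof.
move=> p0 /andP[q0 q1] iL jL.
have dist_le : `|g j - g i| <= 2 * \sum_(0 <= k < L.+1) dyadic_osc g L k.
  rewrite mulr2n mulrDl mul1r (le_trans (ler_distD (g 0%N) _ _)) //.
  by apply: lerD; [|rewrite distrC]; apply: dyadic_chaining.
set S := \sum_(0 <= k < L.+1) dyadic_osc g L k in dist_le *.
have S0 : 0 <= S by apply: sumr_ge0 => k _; exact: dyadic_osc_ge0.
have q1' : 0 < 1 - q by rewrite subr_gt0.
have S_le : S `^ p <= ((1 - q)^-1) `^ p *
    \sum_(0 <= k < L.+1) ((q `^ p) ^+ k)^-1 * dyadic_osc g L k `^ p.
  apply: (le_trans (powR_sum_le_weighted _ p0 (dyadic_osc_ge0 g L)
                                       (fun k => exprn_gt0 k q0))).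
  apply: ler_pM; first exact: powR_ge0.
  - by apply: sumr_ge0 => k _; exact: powR_ge0.
  - apply: (ge0_ler_powR (ltW p0)); rewrite ?nnegrE ?invr_ge0 ?(ltW q1') //.
      by apply: sumr_ge0 => k _; rewrite exprn_ge0 ?ltW.
    by rewrite sum_expr_le_inv ?q0.
  apply: ler_sum => k _.
  have qk0 : 0 <= q ^+ k by rewrite exprn_ge0 ?(ltW q0).
  by rewrite powRM ?dyadic_osc_ge0 ?invr_ge0 // powRV // powR_exprn ?(ltW q0) // mulrC.
apply: (le_trans (ge0_ler_powR (ltW p0) _ _ dist_le)); rewrite ?nnegrE ?mulr_ge0 //.
rewrite /dyadic_bound !powRM ?invr_ge0 ?(ltW q1') // -mulrA ler_wpM2l ?powR_ge0 //.
apply: (le_trans S_le); rewrite ler_wpM2l ?powR_ge0 // ler_sum // => k _.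
rewrite ler_wpM2l ?invr_ge0 ?exprn_ge0 ?powR_ge0 // powR_bigmax_le_sum //.
by move=> m; exact: normr_ge0.
Qed.

End DyadicChaining.

Section DyadicSums.
Variable R : realType.

Lemma sum_dyadic_geometric_le (Q x : R) L : 0 < Q < 1 -> 0 < x ->
  2 <= Q ^+ 2 * x ->
  \sum_(0 <= k < L.+1) (Q ^+ k)^-1 * x ^+ (L - k) *+ 2 ^ k <= (1 - Q)^-1 * x ^+ L.
Proof.
move=> /andP[Q0 Q1] x0 Qx2.
apply: (@le_trans _ _ (\sum_(0 <= k < L.+1) Q ^+ k * x ^+ L)); last first.
  rewrite -mulr_suml ler_wpM2r ?exprn_ge0 ?(ltW x0) //.
  by rewrite sum_expr_le_inv ?Q0.
rewrite big_nat_cond [leRHS]big_nat_cond.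
apply: ler_sum => k /andP[/andP[_]]; rewrite ltnS => kL _.
have Qk0 : Q ^+ k != 0 by rewrite expf_neq0 ?lt0r_neq0.
have -> : Q ^+ k * x ^+ L = (Q ^+ k)^-1 * x ^+ (L - k) * (Q ^+ 2 * x) ^+ k.
  rewrite -{1}(subnK kL) exprD exprMn -exprM mulnC exprM.
  by field.
rewrite -mulr_natr ler_wpM2l ?mulr_ge0 ?invr_ge0 ?exprn_ge0 ?(ltW Q0) ?(ltW x0) //.
by rewrite natrX lerXn2r ?nnegrE ?mulr_ge0 ?exprn_ge0 ?(ltW Q0) ?(ltW x0).
Qed.

Lemma exprn_powR2_le (r : R) L n : 0 <= r -> (2 ^ L <= 2 * n)%N ->
  (2 `^ r) ^+ L <= 2 `^ r * n%:R `^ r.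
Proof.
move=> r0 Ln; rewrite -powR_exprn // -natrX -powRM // -natrM.
by apply: (ge0_ler_powR r0); rewrite ?nnegrE ?ler_nat.
Qed.

Lemma sum_dyadic_moment_le (Q H K r s : R) L n :
  0 < Q < 1 -> 0 <= H -> 0 <= K -> 0 <= s <= r -> 2 <= Q ^+ 2 * 2 `^ s ->
  (2 ^ L <= 2 * n)%N ->
  \sum_(0 <= k < L.+1) (Q ^+ k)^-1 *
      ((H * (2 `^ r) ^+ (L - k) + K * (2 `^ s) ^+ (L - k)) *+ 2 ^ k)
    <= (1 - Q)^-1 * 2 `^ r * (H * n%:R `^ r + K * n%:R `^ s).
Proof.
move=> /andP[Q0 Q1] H0 K0 /andP[s0 sr] Qs Ln.
have s_r : 2 `^ s <= 2 `^ r by rewrite ler_powR ?ler1n.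
have Qr : 2 <= Q ^+ 2 * 2 `^ r.
  by rewrite (le_trans Qs) // ler_wpM2l ?exprn_ge0 ?(ltW Q0).
under eq_bigr do rewrite mulrnDl mulrDr !mulrnAr mulrCA [_ * (K * _)]mulrCA
  -[(H * _) *+ _]mulrnAr -[(K * _) *+ _]mulrnAr.
have geo x : 0 < x -> 2 <= Q ^+ 2 * x -> \sum_(0 <= k < L.+1)
    (Q ^+ k)^-1 * x ^+ (L - k) *+ 2 ^ k <= (1 - Q)^-1 * x ^+ L.
  by move=> x0 Qx; rewrite sum_dyadic_geometric_le ?Q0.
rewrite big_split -!mulr_sumr /=.
rewrite (le_trans (lerD (ler_wpM2l H0 (geo _ (powR_gt0 _ _) Qr))
                       (ler_wpM2l K0 (geo _ (powR_gt0 _ _) Qs)))) //.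
have iQ : 0 <= (1 - Q)^-1 by rewrite invr_ge0 subr_ge0 (ltW Q1).
have -> : (1 - Q)^-1 * 2 `^ r * (H * n%:R `^ r + K * n%:R `^ s)
    = H * ((1 - Q)^-1 * (2 `^ r * n%:R `^ r))
      + K * ((1 - Q)^-1 * (2 `^ r * n%:R `^ s)) by ring.
rewrite lerD // ler_wpM2l // ler_wpM2l //.
  exact: exprn_powR2_le (le_trans s0 sr) Ln.
by rewrite (le_trans (exprn_powR2_le s0 Ln)) // ler_wpM2r ?powR_ge0.
Qed.

End DyadicSums.

Section ChainingConstant.
Variable R : realType.
Implicit Types alpha gamma p : R.

(* With [Q := chaining_rate gamma p `^ p = 2 `^ ((1 - gamma) / 2)], level [k]
   has [2 ^ k] intervals, each with moment [2 ^ (- k * gamma)] relative to the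
   coarsest one, and weight [Q ^ (- k)]: it contributes a factor [Q ^ k]. *)
Definition chaining_rate gamma p : R := 2 `^ ((1 - gamma) / (2 * p)).

Definition chaining_const alpha gamma p : R :=
  (2 / (1 - chaining_rate gamma p)) `^ p * (1 - chaining_rate gamma p `^ p)^-1
  * 2 `^ (alpha * p).

Lemma chaining_rateP gamma p : 1 < gamma -> 0 < p ->
  [/\ 0 < chaining_rate gamma p < 1, 0 < chaining_rate gamma p `^ p < 1
    & (chaining_rate gamma p `^ p) ^+ 2 * 2 `^ gamma = 2].
Proof.
move=> g1 p0; have Q_E : chaining_rate gamma p `^ p = 2 `^ ((1 - gamma) / 2).
  by rewrite -powRrM; congr (_ `^ _); field; rewrite gt_eqF.
rewrite Q_E !powR_gt0 ?powR_lt1 ?ltr1n //; last 2 first.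
- by rewrite pmulr_llt0 ?invr_gt0 ?mulr_gt0 //; lra.
- by rewrite pmulr_llt0 ?invr_gt0 //; lra.
rewrite expr2 -!powRD ?pnatr_eq0 ?implybT //.
have -> : (1 - gamma) / 2 + (1 - gamma) / 2 + gamma = 1 by field.
by rewrite powRr1.
Qed.

Lemma chaining_const_gt0 alpha gamma p : 1 < gamma -> 0 < p ->
  0 < chaining_const alpha gamma p.
Proof.
move=> g1 p0; have [/andP[_ q1] /andP[_ Q1] _] := chaining_rateP g1 p0.
by rewrite !mulr_gt0 ?powR_gt0 ?invr_gt0 ?divr_gt0 // subr_gt0.
Qed.

End ChainingConstant.

Section MaxIncrements.
Variables (R : realType) (T : Type) (Y : nat -> T -> R) (n : nat) (p : R).

Lemma maxincr_pow_le x z :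
  (forall i j, (i <= n)%N -> (j <= n)%N -> `|Y j x - Y i x| `^ p <= z) ->
  maxincr_pow Y n p x <= z.
Proof.
move=> Yz; have z0 : 0 <= z := le_trans (powR_ge0 _ _) (Yz 0%N 0%N isT isT).
apply: bigmax_le => // i _; apply: bigmax_le => // j _.
by apply: Yz; rewrite -ltnS ltn_ord.
Qed.

Lemma max_pow_le_maxincr_pow x :
  Y 0%N x = 0 -> max_pow Y n p x <= maxincr_pow Y n p x.
Proof.
move=> Y0; apply: bigmax_le => [|i _]; first exact: bigmax_ge_id.
rewrite -[Y i x]subr0 -Y0 /maxincr_pow.
apply: le_trans (@le_bigmax_seq _ _ _ _ _ ord0 xpredT _ (mem_index_enum _) isT).
exact: (@le_bigmax_seq _ _ _ _ _ i _ _ (mem_index_enum _)).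
Qed.

End MaxIncrements.

Section Integration.
Local Open Scope ereal_scope.
Context (R : realType) (d : measure_display) (T : measurableType d).

Lemma measurable_bigmax (I : Type) (r : seq I) (P : pred I) (F : I -> T -> R) :
  (forall i, measurable_fun setT (F i)) ->
  measurable_fun setT (fun x => \big[Num.max/0%R]_(i <- r | P i) F i x).
Proof.
move=> mF; elim: r => [|a r IH].
  by under eq_fun do rewrite big_nil; exact: measurable_cst.
under eq_fun do rewrite big_cons.
by case: (P a) => //; exact: measurable_maxr.
Qed.

Lemma measurable_powR_dist (f g : T -> R) (p : R) :
  measurable_fun setT f -> measurable_fun setT g ->
  measurable_fun setT (fun x => (`|f x - g x| `^ p)%R).
Proof.
move=> mf mg; apply: (measurableT_comp (measurable_powR p)).
exact: measurableT_comp (@normr_measurable R setT) (measurable_funB mf mg).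
Qed.

Variable mu : {measure set T -> \bar R}.

Lemma le_integral_sum (I : Type) (r : seq I) (f : I -> T -> R) (B : I -> R) :
  (forall i, measurable_fun setT (f i)) -> (forall i x, (0 <= f i x)%R) ->
  (forall i, \int[mu]_x (f i x)%:E <= (B i)%:E) ->
  \int[mu]_x (\sum_(i <- r) f i x)%:E <= (\sum_(i <- r) B i)%:E.
Proof.
move=> mf f0 fB; under eq_integral do rewrite -sumEFin.
rewrite ge0_integral_sum // => [|i|i x _]; last 2 first.
- exact/measurable_EFinP.
- by rewrite lee_fin.
by rewrite -sumEFin lee_sum.
Qed.

Lemma le_integralZl (c : R) (f : T -> R) (B : R) :
  (0 <= c)%R -> measurable_fun setT f -> (forall x, 0 <= f x)%R ->
  \int[mu]_x (f x)%:E <= B%:E -> \int[mu]_x (c * f x)%:E <= (c * B)%:E.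
Proof.
move=> c0 mf f0 fB; under eq_integral do rewrite EFinM.
rewrite ge0_integralZl_EFin //.
- by rewrite EFinM lee_wpmul2l ?lee_fin.
- by move=> x _; rewrite lee_fin.
- exact/measurable_EFinP.
Qed.

End Integration.

Section DyadicMoments.
Local Open Scope ereal_scope.
Context (R : realType) (d : measure_display) (T : measurableType d)
  (P : probability T R).
Variables (Y : nat -> T -> R) (n : nat) (p alpha b gamma H K : R).
Hypothesis mY : forall i, (i <= n)%N -> measurable_fun setT (Y i).
Hypothesis moment_incr : forall i j, (i <= j)%N -> (j <= n)%N ->
  \int[P]_x (`|Y j x - Y i x| `^ p)%:E
    <= (H * (j - i)%:R `^ (alpha * p) + K * (j - i)%:R `^ b)%:E.
Hypotheses (H0 : (0 <= H)%R) (K0 : (0 <= K)%R) (ap0 : (0 <= alpha * p)%R).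
Hypotheses (b0 : (0 <= b)%R) (bg : (b <= gamma)%R).

Lemma measurable_dyadic_incr L k m :
  measurable_fun setT (fun x => dyadic_incr (fun t => Y (minn t n) x) L k m `^ p)%R.
Proof. by apply: measurable_powR_dist; apply: mY; rewrite geq_minr. Qed.

Lemma measurable_maxincr_pow : measurable_fun setT (maxincr_pow Y n p).
Proof.
apply: measurable_bigmax => i; apply: measurable_bigmax => j.
by apply: measurable_powR_dist; apply: mY; rewrite -ltnS ltn_ord.
Qed.

Lemma measurable_dyadic_bound L q :
  measurable_fun setT (fun x => dyadic_bound (fun t => Y (minn t n) x) L p q).
Proof.
apply: measurable_funM (measurable_cst _) _; apply: measurable_sum => k.
apply: measurable_funM (measurable_cst _) _; apply: measurable_sum => m.
exact: measurable_dyadic_incr.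
Qed.

Lemma integral_dyadic_incr_le L k m :
  \int[P]_x (dyadic_incr (fun t => Y (minn t n) x) L k m `^ p)%:E
    <= (H * (2 `^ (alpha * p)) ^+ (L - k) + K * (2 `^ gamma) ^+ (L - k))%:E.
Proof.
set l := (2 ^ (L - k))%N.
have ij : (minn (m * l) n <= minn (m.+1 * l) n)%N by rewrite mulSn; lia.
apply: (le_trans (moment_incr ij (geq_minr _ _))); rewrite lee_fin.
have dl : ((minn (m.+1 * l) n - minn (m * l) n)%:R <= l%:R :> R)%R.
  by rewrite ler_nat mulSn; lia.
have l1 : (1 <= l%:R :> R)%R by rewrite ler1n expn_gt0.
have lE r : (l%:R `^ r = (2 `^ r) ^+ (L - k) :> R)%R by rewrite natrX powR_exprn.
rewrite -!lE; apply: lerD; apply: ler_wpM2l => //.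
  by apply: (ge0_ler_powR ap0); rewrite ?nnegrE.
by apply: le_trans (ler_powR l1 bg); apply: (ge0_ler_powR b0); rewrite ?nnegrE.
Qed.

Lemma integral_dyadic_bound_le L q :
  \int[P]_x (dyadic_bound (fun t => Y (minn t n) x) L p q)%:E
    <= ((2 / (1 - q)) `^ p * \sum_(0 <= k < L.+1) ((q `^ p) ^+ k)^-1 *
          ((H * (2 `^ (alpha * p)) ^+ (L - k) + K * (2 `^ gamma) ^+ (L - k))
             *+ 2 ^ k))%:E.
Proof.
have incr0 k m x : (0 <= dyadic_incr (fun t => Y (minn t n) x) L k m `^ p)%R.
  exact: powR_ge0.
have w0 k : (0 <= ((q `^ p) ^+ k)^-1)%R by rewrite invr_ge0 exprn_ge0 ?powR_ge0.
have mS k : measurable_fun setT (fun x =>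
    \sum_(0 <= m < 2 ^ k) dyadic_incr (fun t => Y (minn t n) x) L k m `^ p)%R.
  by apply: measurable_sum => m; exact: measurable_dyadic_incr.
apply: le_integralZl; rewrite ?powR_ge0 //.
- apply: measurable_sum => k; exact: measurable_funM (measurable_cst _) (mS k).
- by move=> x; apply: sumr_ge0 => k _; rewrite mulr_ge0 ?sumr_ge0.
apply: le_integral_sum => [k|k x|k].
- exact: measurable_funM (measurable_cst _) (mS k).
- by rewrite mulr_ge0 ?sumr_ge0.
apply: le_integralZl => //; first by move=> x; rewrite sumr_ge0.
rewrite -[in X in _ <= X%:E](subn0 (2 ^ k)%N) -sumr_const_nat.
by apply: le_integral_sum => // m;
  [exact: measurable_dyadic_incr | exact: integral_dyadic_incr_le].
Qed.

Hypotheses (p0 : (0 < p)%R) (g1 : (1 < gamma)%R) (gap : (gamma <= alpha * p)%R).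

Lemma integral_maxincr_pow_le : (1 <= n)%N ->
  \int[P]_x (maxincr_pow Y n p x)%:E <= (chaining_const alpha gamma p *
    (H * n%:R `^ (alpha * p) + K * n%:R `^ gamma))%:E.
Proof.
move=> n1; have [q01 Q01 Q2a] := chaining_rateP g1 p0.
set L := (trunc_log 2 n).+1.
have nL : (n <= 2 ^ L)%N by apply/ltnW/trunc_log_ltn.
have Ln : (2 ^ L <= 2 * n)%N by rewrite expnS leq_mul2l trunc_logP.
pose Z x := dyadic_bound (fun t => Y (minn t n) x) L p (chaining_rate gamma p).
have maxincr_le x : (maxincr_pow Y n p x <= Z x)%R.
  apply: maxincr_pow_le => i j i_n j_n.
  have := powR_dist_le_dyadic_bound (fun t => Y (minn t n) x) p0 q01
    (leq_trans i_n nL) (leq_trans j_n nL).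
  by rewrite /= (minn_idPl i_n) (minn_idPl j_n).
apply: (@le_trans _ _ (\int[P]_x (Z x)%:E)).
  apply: ge0_le_integral => //.
  - by move=> x _; rewrite lee_fin; exact: bigmax_ge_id.
  - exact/measurable_EFinP/measurable_maxincr_pow.
  - exact/measurable_EFinP/measurable_dyadic_bound.
  - by move=> x _; rewrite lee_fin.
apply: le_trans (integral_dyadic_bound_le L (chaining_rate gamma p)) _.
rewrite lee_fin /chaining_const -!mulrA ler_wpM2l ?powR_ge0 // mulrA.
apply: sum_dyadic_moment_le; rewrite ?Q2a ?gap ?andbT //.
by rewrite ltW // (lt_trans ltr01).
Qed.

Lemma integral_max_pow_le : (1 <= n)%N -> (forall x, Y 0%N x = 0%R) ->
  \int[P]_x (max_pow Y n p x)%:E <= (chaining_const alpha gamma p *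
    (H * n%:R `^ (alpha * p) + K * n%:R `^ gamma))%:E.
Proof.
move=> n1 Y0; apply: le_trans (integral_maxincr_pow_le n1).
apply: ge0_le_integral => //.
- by move=> x _; rewrite lee_fin; exact: bigmax_ge_id.
- apply/measurable_EFinP/measurable_bigmax => i.
  apply: measurableT_comp (measurable_powR p) _.
  apply: measurableT_comp (@normr_measurable R setT) _.
  by apply: mY; rewrite -ltnS ltn_ord.
- exact/measurable_EFinP/measurable_maxincr_pow.
- by move=> x _; rewrite lee_fin max_pow_le_maxincr_pow.
Qed.

End DyadicMoments.

Local Open Scope ereal_scope.

Theorem lemma3p5 (R : realType) (alpha b p gamma : R) :
  (0 < alpha)%R -> (alpha <= 1)%R -> (0 < b)%R ->
  (Num.max (1 / alpha) (b / alpha) < p)%R ->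
  (Num.max 1 b < gamma)%R -> (gamma < alpha * p)%R ->
  exists c : R, (0 < c)%R /\
    forall (d : measure_display) (T : measurableType d)
           (P : probability T R) (H K : R) (n : nat) (Y : nat -> T -> R),
      (0 <= H)%R -> (0 <= K)%R -> (1 <= n)%N ->
      (forall i, (i <= n)%N -> measurable_fun setT (Y i)) ->
      (forall i j, (i <= j)%N -> (j <= n)%N ->
         \int[P]_x (`|Y j x - Y i x| `^ p)%:E
           <= (H * (j - i)%:R `^ (alpha * p) + K * (j - i)%:R `^ b)%:E) ->
      \int[P]_x (maxincr_pow Y n p x)%:E
        <= (c * (H * n%:R `^ (alpha * p) + K * n%:R `^ gamma))%:E
      /\ ((forall x, Y 0%N x = 0%R) ->
          \int[P]_x (max_pow Y n p x)%:E
            <= (c * (H * n%:R `^ (alpha * p) + K * n%:R `^ gamma))%:E).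
Proof.
move=> alpha0 _ /ltW b0; rewrite !gt_max => /andP[p_gt _] /andP[g1 /ltW bg] /ltW gap.
have p0 : (0 < p)%R by rewrite (lt_trans _ p_gt) ?divr_gt0.
have ap0 : (0 <= alpha * p)%R by rewrite mulr_ge0 ?ltW.
exists (chaining_const alpha gamma p); split; first exact: chaining_const_gt0.
move=> d T P H K n Y H0 K0 n1 mY moment_incr.
by split; [apply: (integral_maxincr_pow_le (b := b))
           | apply: (integral_max_pow_le (b := b))].
Qed.
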